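(* For all $s,s^*\in\mathbb R$, $$(s-s^* )\big(\mathrm{shrink}(s)-\mathrm{shrink}(s^* )\big)\ge\frac{|\mathrm{shrink}(s^* )|}{|\mathrm{shrink}(s^* )|+2}(s-s^* )^2\ge0,$$ and the first inequality holds with equality when $s=-\mathrm{sign}(s^* )$.
   Context: $\mathrm{shrink}(s):=\mathrm{sign}(s)\max\{|s|-1,0\}$ (soft-thresholding with threshold $1$). *)

From Stdlib Require Import Reals Lra.
Open Scope R_scope.

Definition sign (s : R) : R :=
  if Rlt_dec 0 s then 1 else if Rlt_dec s 0 then -1 else 0.

Definition shrink (s : R) : R := sign s * Rmax (Rabs s - 1) 0.

From Stdlib Require Import Reals Lra.
Open Scope R_scope.

(* Soft-thresholding is piecewise affine: shrink s = s - 1 for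
   s > 1, shrink s = 0 for |s| <= 1 and shrink s = s + 1 for s < -1; it is
   moreover odd.  Writing a = |shrink t|, the claim is equivalent (after
   multiplying by a + 2 > 0) to the nonnegativity of the weighted gap
     (a + 2) (s - t) (shrink s - shrink t) - a (s - t)^2,
   which is invariant under (s, t) |-> (-s, -t) by oddness, so it suffices
   to treat t >= 0.  For 0 <= t <= 1 we have a = 0 and the claim is the
   monotonicity of shrink; for t > 1 we have a = t - 1 and, according to
   whether s > 1, |s| <= 1 or s < -1, the gap equals 2(s - t)^2,
   (t - 1)(t - s)(s + 1) or 2(t - s)(-1 - s), all nonnegative; the middle one
   vanishes at s = -1 = -sign t, which gives the equality case. *)

Lemma shrink_above (s : R) : 1 < s -> shrink s = s - 1.
Proof.
  intros Hs; unfold shrink, sign.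
  destruct (Rlt_dec 0 s); [|lra].
  rewrite Rabs_right, Rmax_left by lra; ring.
Qed.

Lemma shrink_within (s : R) : -1 <= s <= 1 -> shrink s = 0.
Proof.
  intros Hs; unfold shrink.
  rewrite Rmax_right; [ring|].
  pose proof (Rabs_le s 1 Hs); lra.
Qed.

Lemma shrink_below (s : R) : s < -1 -> shrink s = s + 1.
Proof.
  intros Hs; unfold shrink, sign.
  destruct (Rlt_dec 0 s); [lra|].
  destruct (Rlt_dec s 0); [|lra].
  rewrite Rabs_left, Rmax_left by lra; ring.
Qed.

Lemma sign_opp (s : R) : sign (- s) = - sign s.
Proof.
  unfold sign.
  destruct (Rlt_dec 0 s), (Rlt_dec s 0), (Rlt_dec 0 (- s)), (Rlt_dec (- s) 0);
    lra.
Qed.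

Lemma shrink_opp (s : R) : shrink (- s) = - shrink s.
Proof.
  destruct (Rlt_dec 1 s) as [H1|H1];
    [rewrite (shrink_above s), (shrink_below (- s)) by lra; ring|].
  destruct (Rlt_dec s (-1)) as [H2|H2];
    [rewrite (shrink_below s), (shrink_above (- s)) by lra; ring|].
  rewrite !shrink_within by lra; ring.
Qed.

(* The claimed inequality with the denominator a + 2 cleared. *)
Definition weighted_gap (s t : R) : R :=
  (Rabs (shrink t) + 2) * ((s - t) * (shrink s - shrink t))
  - Rabs (shrink t) * (s - t) ^ 2.

Lemma weighted_gap_opp (s t : R) : weighted_gap (- s) (- t) = weighted_gap s t.
Proof.
  unfold weighted_gap; rewrite !shrink_opp, Rabs_Ropp; ring.
Qed.

Lemma weighted_gap_above_within (s t : R) : 1 < t -> -1 <= s <= 1 ->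
  weighted_gap s t = (t - 1) * (t - s) * (s + 1).
Proof.
  intros Ht Hs; unfold weighted_gap.
  rewrite (shrink_above t), Rabs_right, (shrink_within s) by lra; ring.
Qed.

Lemma weighted_gap_within (s t : R) : -1 <= t <= 1 ->
  weighted_gap s t = 2 * ((s - t) * shrink s).
Proof.
  intros Ht; unfold weighted_gap.
  rewrite (shrink_within t), Rabs_R0 by lra; ring.
Qed.

Lemma weighted_gap_nonneg_nonneg_t (s t : R) : 0 <= t -> 0 <= weighted_gap s t.
Proof.
  intros Ht.
  destruct (Rlt_dec 1 t) as [Ht1|Ht1].
  - destruct (Rlt_dec 1 s) as [Hs1|Hs1], (Rlt_dec s (-1)) as [Hs2|Hs2];
      [lra| | |].
    + assert (E : weighted_gap s t = 2 * (s - t) ^ 2).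
      { unfold weighted_gap.
        rewrite (shrink_above s), (shrink_above t), Rabs_right by lra; ring. }
      rewrite E; pose proof (pow2_ge_0 (s - t)); lra.
    + assert (E : weighted_gap s t = 2 * (t - s) * (- 1 - s)).
      { unfold weighted_gap.
        rewrite (shrink_below s), (shrink_above t), Rabs_right by lra; ring. }
      rewrite E; apply Rmult_le_pos; [apply Rmult_le_pos|]; lra.
    + rewrite weighted_gap_above_within by lra.
      apply Rmult_le_pos; [apply Rmult_le_pos|]; lra.
  - rewrite weighted_gap_within by lra.
    destruct (Rlt_dec 1 s); [rewrite shrink_above by lra; nra|].
    destruct (Rlt_dec s (-1)); [rewrite shrink_below by lra; nra|].
    rewrite shrink_within by lra; lra.
Qed.

Lemma weighted_gap_nonneg (s t : R) : 0 <= weighted_gap s t.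
Proof.
  destruct (Rle_dec 0 t) as [Ht|Ht].
  - now apply weighted_gap_nonneg_nonneg_t.
  - rewrite <- weighted_gap_opp.
    apply weighted_gap_nonneg_nonneg_t; lra.
Qed.

Lemma weighted_gap_sign_nonneg_t (t : R) : 0 <= t -> weighted_gap (- sign t) t = 0.
Proof.
  intros Ht; unfold sign.
  destruct (Rlt_dec 0 t); [|destruct (Rlt_dec t 0)]; [|lra|].
  - destruct (Rlt_dec 1 t) as [Ht1|Ht1].
    + rewrite weighted_gap_above_within by lra; ring.
    + rewrite weighted_gap_within, shrink_within by lra; ring.
  - rewrite weighted_gap_within, shrink_within by lra; ring.
Qed.

Lemma weighted_gap_sign (t : R) : weighted_gap (- sign t) t = 0.
Proof.
  destruct (Rle_dec 0 t) as [Ht|Ht].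
  - now apply weighted_gap_sign_nonneg_t.
  - rewrite <- (Ropp_involutive t) at 2.
    rewrite <- (Ropp_involutive (sign t)), <- sign_opp, weighted_gap_opp.
    apply weighted_gap_sign_nonneg_t; lra.
Qed.

Theorem mainTheorem16 (s sstar : R) :
  ((s - sstar) * (shrink s - shrink sstar)
     >= Rabs (shrink sstar) / (Rabs (shrink sstar) + 2) * (s - sstar) ^ 2
   /\ Rabs (shrink sstar) / (Rabs (shrink sstar) + 2) * (s - sstar) ^ 2 >= 0)
  /\ (s = - sign sstar ->
      (s - sstar) * (shrink s - shrink sstar)
        = Rabs (shrink sstar) / (Rabs (shrink sstar) + 2) * (s - sstar) ^ 2).
Proof.
  pose proof (weighted_gap_nonneg s sstar) as Hgap.
  pose proof (weighted_gap_sign sstar) as Heq.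
  unfold weighted_gap in Hgap, Heq.
  pose proof (Rabs_pos (shrink sstar)) as Ha.
  set (a := Rabs (shrink sstar)) in *.
  (* Multiplying by a + 2 > 0 turns the claimed bound into the weighted gap. *)
  assert (Hcancel : forall x, (a + 2) * (a / (a + 2) * x) = a * x)
    by (intros; field; lra).
  split; [split|].
  - apply Rle_ge, (Rmult_le_reg_l (a + 2)); [lra|].
    rewrite Hcancel; lra.
  - apply Rle_ge, Rmult_le_pos; [|apply pow2_ge_0].
    unfold Rdiv; apply Rmult_le_pos; [lra|].
    left; apply Rinv_0_lt_compat; lra.
  - intros ->.
    apply (Rmult_eq_reg_l (a + 2)); [|lra].
    rewrite Hcancel; lra.
Qed.
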